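(* Let $n,m,N$ be positive integers, let $A_0,\ldots,A_m\in\mathbb{R}^{n\times n}$, let $\tau_0=0$ and $\tau_1,\ldots,\tau_m>0$, and put $\tau_{\max}=\max_i\tau_i$. Let $\theta_{N,-N},\ldots,\theta_{N,0}$ be $N+1$ distinct points of $[-\tau_{\max},0]$ with $\theta_{N,0}=0$, let $l_{N,k}$ ($k=-N,\ldots,0$) be the corresponding Lagrange polynomials of degree $N$ ($l_{N,k}(\theta_{N,i})=1$ if $i=k$ and $0$ otherwise), and let $d_{i,k}=l_{N,k}'(\theta_{N,i})$. Define the $(N+1)n\times(N+1)n$ block matrix ${\bf A_N}$ whose block rows indexed by $i=-N,\ldots,-1$ are $[d_{i,-N}I_n\ \cdots\ d_{i,-1}I_n\ \ d_{i,0}I_n]$ and whose last block row is $[\Gamma_{-N}\ \cdots\ \Gamma_{-1}\ \Gamma_0]$, where $\Gamma_0=A_0+\sum_{l=1}^m A_l\,l_{N,0}(-\tau_l)$ and $\Gamma_k=\sum_{l=1}^m A_l\,l_{N,k}(-\tau_l)$ for $k=-N,\ldots,-1$; and let ${\bf B_N}=[0_n\ \cdots\ 0_n\ I_n]^*\in\mathbb{R}^{(N+1)n\times n}$. For $\lambda\in\mathbb{C}$ let $p_N(\cdot;\lambda)$ be the polynomial of degree (at most) $N$ with $p_N(0;\lambda)=1$ and $p_N'(\theta_{N,i};\lambda)=\lambda\,p_N(\theta_{N,i};\lambda)$ for $i=-N,\ldots,-1$. Then, as matrix-valued functions of $\lambda$ (at every $\lambda$ where both sides are defined), $$ {\bf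 B_N}^*(\lambda I_{(N+1)n}-{\bf A_N})^{-1}{\bf B_N}=\Big(\lambda I_n-A_0-\sum_{i=1}^m A_i\,p_N(-\tau_i;\lambda)\Big)^{-1}. $$
   Context: ${\bf A_N},{\bf B_N}$ describe a spectral (collocation) discretization of the delay system $\dot x(t)=\sum_{i=0}^m A_ix(t-\tau_i)+u(t)$, $y=x$. The superscript $*$ denotes conjugate transpose. *)

From HB Require Import structures.
From mathcomp Require Import all_boot all_order all_algebra.
From mathcomp Require Import complex.
Set Implicit Arguments. Unset Strict Implicit. Unset Printing Implicit Defensive.
Import Order.TTheory GRing.Theory Num.Theory.
Local Open Scope ring_scope.
Local Open Scope complex_scope.

(* Nodes are indexed by j : 'I_N.+1, where j corresponds to k = j - N
   (so ord_max corresponds to k = 0). *)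

Definition lagrange (R : fieldType) (N : nat) (theta : 'I_N.+1 -> R)
    (k : 'I_N.+1) : {poly R} :=
  \prod_(j < N.+1 | j != k) ((theta k - theta j)^-1 *: ('X - (theta j)%:P)).

Definition dcoef (R : fieldType) (N : nat) (theta : 'I_N.+1 -> R)
    (i k : 'I_N.+1) : R := ((lagrange theta k)^`()).[theta i].

Definition Gamma (R : fieldType) (n m N : nat) (theta : 'I_N.+1 -> R)
    (A : 'I_m.+1 -> 'M[R]_n) (tau : 'I_m.+1 -> R) (k : 'I_N.+1) : 'M[R]_n :=
  (if k == ord_max then A ord0 else 0)
  + \sum_(l < m.+1 | l != ord0) ((lagrange theta k).[- tau l] *: A l).

Definition tau_max (R : realDomainType) (m : nat) (tau : 'I_m.+1 -> R) : R :=
  \big[Num.max/0]_(i < m.+1) tau i.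

Definition AN (R : fieldType) (n m N : nat) (theta : 'I_N.+1 -> R)
    (A : 'I_m.+1 -> 'M[R]_n) (tau : 'I_m.+1 -> R)
    : 'M[R]_(\sum_(i < N.+1) n, \sum_(j < N.+1) n) :=
  \mxblock_(i < N.+1, j < N.+1)
     (if i == ord_max then Gamma theta A tau j
      else (dcoef theta i j)%:M : 'M[R]_n).

Definition BN (R : fieldType) (n N : nat) : 'M[R]_(\sum_(i < N.+1) n, n) :=
  \mxcol_(i < N.+1) (if i == ord_max then 1%:M else 0 : 'M[R]_n).

Definition cmx (R : rcfType) (p q : nat) (M : 'M[R]_(p, q)) : 'M[R[i]]_(p, q) :=
  map_mx (fun x => x%:C) M.

Definition ctr (R : rcfType) (p q : nat) (M : 'M[R[i]]_(p, q)) : 'M[R[i]]_(q, p) :=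
  map_mx (@conjc R) M^T.

Definition is_pN (R : rcfType) (N : nat) (theta : 'I_N.+1 -> R) (lam : R[i])
    (p : {poly R[i]}) : Prop :=
  [/\ (size p <= N.+1)%N, p.[0] = 1 &
      forall j : 'I_N.+1, j != ord_max ->
        (p^`()).[(theta j)%:C] = lam * p.[(theta j)%:C]].

From Pilot Require Import Defs.
From HB Require Import structures.
From mathcomp Require Import all_boot all_order all_algebra.
From mathcomp Require Import complex zify.
Set Implicit Arguments.
Unset Strict Implicit.
Unset Printing Implicit Defensive.

Import Order.TTheory GRing.Theory Num.Theory.
Local Open Scope ring_scope.
Local Open Scope complex_scope.

(** The block vector X = [p(θ_{-N}) I; ...; p(θ_0) I] built from the
    collocation polynomial satisfies (λ - A_N) X = B_N (λ - A_0 - Σ A_l p(-τ_l)):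
    the first N block rows vanish because p' = λ p at the nodes and
    differentiating the Lagrange interpolant of p at θ_i gives Σ_k d_{i,k} p(θ_k),
    while the last row evaluates that interpolant at -τ_l.  Since moreover
    B_N^* X = p(0) I = I, multiplying by B_N^* (λ - A_N)^{-1} yields the claim;
    this exhibits a left inverse of the right-hand matrix. *)

Section Lagrange.
Variables (F : fieldType) (N : nat) (x : 'I_N.+1 -> F).
Hypothesis x_inj : injective x.

Lemma lagrange_node (i k : 'I_N.+1) : (Defs.lagrange x k).[x i] = (i == k)%:R.
Proof.
rewrite /Defs.lagrange horner_prod.
under eq_bigr => j _ do rewrite hornerZ hornerXsubC.
have [<-|neq_ik] := eqVneq i k.
  by apply: big1 => j ji; rewrite mulVf // subr_eq0 (inj_eq x_inj) eq_sym.
by rewrite (bigD1 i) //= subrr mulr0 mul0r.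
Qed.

Lemma size_lagrange_leq (k : 'I_N.+1) : (size (Defs.lagrange x k) <= N.+1)%N.
Proof.
have size_factor j : j != k -> size ((x k - x j)^-1 *: ('X - (x j)%:P)) = 2%N.
  move=> jk; rewrite size_scale ?size_XsubC //.
  by rewrite invr_eq0 subr_eq0 (inj_eq x_inj) eq_sym.
rewrite /Defs.lagrange size_prod; last by move=> j jk; rewrite -size_poly_eq0 size_factor.
rewrite (eq_bigr (fun=> 2%N) size_factor) sum_nat_const cardC1 card_ord /=.
lia.
Qed.

Lemma lagrange_interp (q : {poly F}) : (size q <= N.+1)%N ->
  q = \sum_(j < N.+1) q.[x j] *: Defs.lagrange x j.
Proof.
move=> size_q; apply/eqP; rewrite -subr_eq0; apply/eqP.
apply: (@roots_geq_poly_eq0 _ _ (map x (enum 'I_N.+1))).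
- apply/allP => _ /mapP [i _ ->]; rewrite /root hornerD hornerN horner_sum.
  under eq_bigr do rewrite hornerZ lagrange_node.
  rewrite (bigD1 i) //= eqxx mulr1 big1 ?addr0 ?subrr //.
  by move=> j; rewrite eq_sym => /negbTE ->; rewrite mulr0.
- by rewrite map_inj_uniq ?enum_uniq.
- rewrite size_map size_enum_ord; apply: leq_trans (size_polyD _ _) _.
  rewrite geq_max size_polyN size_q /=.
  apply: (big_ind (fun r : {poly F} => size r <= N.+1)%N).
  + by rewrite size_poly0.
  + by move=> a b ha hb; apply: leq_trans (size_polyD _ _) _; rewrite geq_max ha hb.
  + by move=> j _; apply: leq_trans (size_scale_leq _ _) (size_lagrange_leq j).
Qed.

End Lagrange.

Section LagrangeMorphism.
Variables (F K : fieldType) (f : {rmorphism F -> K}) (N : nat) (x : 'I_N.+1 -> F).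
Hypothesis x_inj : injective x.

Lemma map_lagrange (k : 'I_N.+1) :
  map_poly f (Defs.lagrange x k) = Defs.lagrange (f \o x) k.
Proof.
rewrite /Defs.lagrange rmorph_prod; apply: eq_bigr => j _ /=.
by rewrite map_polyZ map_polyXsubC fmorphV rmorphB.
Qed.

Let fx_inj : injective (f \o x).
Proof. exact: inj_comp (@fmorph_inj _ _ f) x_inj. Qed.

Lemma horner_interp_map (q : {poly K}) (a : F) : (size q <= N.+1)%N ->
  q.[f a] = \sum_(j < N.+1) q.[f (x j)] * f (Defs.lagrange x j).[a].
Proof.
move=> size_q; rewrite {1}(lagrange_interp fx_inj size_q) horner_sum.
by apply: eq_bigr => j _; rewrite hornerZ -map_lagrange horner_map.
Qed.

Lemma deriv_interp_map (q : {poly K}) (i : 'I_N.+1) : (size q <= N.+1)%N ->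
  q^`().[f (x i)] = \sum_(j < N.+1) q.[f (x j)] * f (dcoef x i j).
Proof.
move=> size_q; rewrite {1}(lagrange_interp fx_inj size_q) raddf_sum horner_sum.
apply: eq_bigr => j _.
by rewrite /= derivZ hornerZ -map_lagrange deriv_map horner_map.
Qed.

End LagrangeMorphism.

Lemma map_mxblock (T U : Type) (f : T -> U) (p : nat) (n_ : 'I_p -> nat)
    (B : forall i j, 'M[T]_(n_ i, n_ j)) :
  map_mx f (\mxblock_(i, j) B i j) = \mxblock_(i, j) map_mx f (B i j).
Proof. by apply/matrixP => i j; rewrite !mxE. Qed.

Lemma map_mxcol (T U : Type) (f : T -> U) (p q : nat) (n_ : 'I_p -> nat)
    (C : forall i, 'M[T]_(n_ i, q)) :
  map_mx f (\mxcol_i C i) = \mxcol_i map_mx f (C i).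
Proof. by apply/matrixP => i j; rewrite !mxE. Qed.

Lemma map_mxrow (T U : Type) (f : T -> U) (p q : nat) (n_ : 'I_p -> nat)
    (C : forall j, 'M[T]_(q, n_ j)) :
  map_mx f (\mxrow_j C j) = \mxrow_j map_mx f (C j).
Proof. by apply/matrixP => i j; rewrite !mxE. Qed.

Lemma scalar_mxblock (T : pzRingType) (p n : nat) (a : T) :
  (a%:M : 'M[T]_(\sum_(i < p) n)) =
  \mxblock_(i < p, j < p) (if i == j then a%:M else 0 : 'M[T]_n).
Proof.
apply/mxblockP => i j; rewrite mxblockK; apply/matrixP => k l; rewrite !mxE.
rewrite -val_eqE /= tagnat.eq_Rank.
by case: (i == j); rewrite !mxE //= mulr0n.
Qed.

Lemma mul_mxblock_scalar_col (T : comPzRingType) (p n : nat)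
    (B : 'I_p -> 'I_p -> 'M[T]_n) (c : 'I_p -> T) :
  \mxblock_(i, j) B i j *m \mxcol_j (c j)%:M
  = \mxcol_i \sum_j c j *: B i j.
Proof.
rewrite mul_mxblock_mxrow; apply: eq_mxcol => i.
by apply: eq_bigr => j _; rewrite mul_mx_scalar.
Qed.

Lemma mul_invmx_eq (T : comUnitRingType) (p q : nat) (M : 'M[T]_p)
    (B X : 'M[T]_(p, q)) (C : 'M[T]_(q, p)) (S : 'M[T]_q) :
  M \in unitmx -> M *m X = B *m S -> C *m X = 1%:M ->
  C *m invmx M *m B = invmx S.
Proof.
move=> M_unit MX CX.
have inv_S : C *m invmx M *m B *m S = 1%:M.
  by rewrite -!mulmxA -MX mulKmx.
have S_unit := (mulmx1_unit inv_S).2.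
by rewrite -[LHS]mulmx1 -(mulmxV S_unit) mulmxA inv_S mul1mx.
Qed.

Lemma cmxE (R : rcfType) (p q : nat) (M : 'M[R]_(p, q)) :
  cmx M = map_mx (real_complex R) M.
Proof. by []. Qed.

Lemma ctr_cmx (R : rcfType) (p q : nat) (M : 'M[R]_(p, q)) :
  ctr (cmx M) = cmx M^T.
Proof. by apply/matrixP => i j; rewrite !mxE conjc_real. Qed.

Section Collocation.
Variables (R : rcfType) (n m N : nat).
Variables (A : 'I_m.+1 -> 'M[R]_n) (tau : 'I_m.+1 -> R) (theta : 'I_N.+1 -> R).
Hypotheses (theta_inj : injective theta) (theta0 : theta ord_max = 0).
Variables (lam : R[i]) (p : {poly R[i]}).
Hypotheses (size_p : (size p <= N.+1)%N) (p0 : p.[0] = 1).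
Hypothesis p_colloc : forall j : 'I_N.+1, j != ord_max ->
  (p^`()).[(theta j)%:C] = lam * p.[(theta j)%:C].

Definition colloc_vec : 'M[R[i]]_(\sum_(j < N.+1) n, n) :=
  \mxcol_j (p.[(theta j)%:C])%:M.

Definition colloc_char_mx : 'M[R[i]]_n :=
  lam%:M - cmx (A ord0) - \sum_(l < m.+1 | l != ord0) (p.[(- tau l)%:C] *: cmx (A l)).

Lemma cmx_AN : cmx (AN theta A tau) = \mxblock_(i, j)
  (if i == ord_max then cmx (Gamma theta A tau j) else ((dcoef theta i j)%:C)%:M).
Proof.
rewrite cmxE map_mxblock; apply: eq_mxblock => i j.
by rewrite (fun_if (map_mx _)) map_scalar_mx.
Qed.

Lemma sum_Gamma_colloc :
  \sum_(j < N.+1) p.[(theta j)%:C] *: cmx (Gamma theta A tau j)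
  = cmx (A ord0) + \sum_(l < m.+1 | l != ord0) p.[(- tau l)%:C] *: cmx (A l).
Proof.
under eq_bigr do rewrite /Gamma cmxE map_mxD map_mx_sum scalerDr.
rewrite big_split /=; congr (_ + _).
  rewrite (bigD1 ord_max) //= eqxx theta0 p0 scale1r big1 ?addr0 // => j.
  by move=> /negbTE ->; rewrite map_mx0 scaler0.
under eq_bigr do rewrite scaler_sumr.
rewrite exchange_big /=; apply: eq_bigr => l _.
under eq_bigr do rewrite map_mxZ scalerA.
by rewrite -scaler_suml -(horner_interp_map _ theta_inj _ size_p).
Qed.

Lemma AN_colloc_vec :
  (lam%:M - cmx (AN theta A tau)) *m colloc_vec = cmx (BN R n N) *m colloc_char_mx.
Proof.
rewrite cmx_AN scalar_mxblock -mxblockB mul_mxblock_scalar_col.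
rewrite /BN cmxE map_mxcol mxcol_mul; apply: eq_mxcol => i.
have [->|i_max] := eqVneq i ord_max.
  under eq_bigr do rewrite scalerBr.
  rewrite sumrB sum_Gamma_colloc (bigD1 ord_max) //= eqxx theta0 p0 scale1r.
  rewrite big1 ?addr0 => [|j /negbTE]; last by rewrite eq_sym => ->; rewrite scaler0.
  by rewrite map_mx1 mul1mx opprD addrA.
rewrite map_mx0 mul0mx.
have row_scalar j : (if i == j then lam%:M else 0) - ((dcoef theta i j)%:C)%:M
    = ((i == j)%:R * lam - (dcoef theta i j)%:C)%:M :> 'M_n.
  by rewrite raddfB /=; case: (i == j); rewrite ?mul1r ?mul0r ?raddf0.
under eq_bigr do rewrite row_scalar scale_scalar_mx.
rewrite -raddf_sum /=; under eq_bigr do rewrite mulrBr.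
rewrite sumrB -(deriv_interp_map _ theta_inj _ size_p) (bigD1 i) //= eqxx mul1r.
rewrite big1 ?addr0 => [|j]; last by rewrite eq_sym => /negbTE ->; rewrite mul0r mulr0.
by rewrite p_colloc // mulrC subrr raddf0.
Qed.

Lemma ctr_BN_colloc_vec : ctr (cmx (BN R n N)) *m colloc_vec = 1%:M.
Proof.
rewrite ctr_cmx /BN tr_mxcol cmxE map_mxrow mul_mxrow_mxcol.
rewrite (bigD1 ord_max) //= big1 ?addr0 => [|j /negbTE ->]; last first.
  by rewrite trmx0 map_mx0 mul0mx.
by rewrite eqxx trmx1 map_mx1 mul1mx theta0 p0.
Qed.

End Collocation.

Theorem theorem1 (R : rcfType) (n m N : nat)
  (Hn : (0 < n)%N) (Hm : (0 < m)%N) (HN : (0 < N)%N)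
  (A : 'I_m.+1 -> 'M[R]_n) (tau : 'I_m.+1 -> R)
  (Htau0 : tau ord0 = 0) (Htau : forall l : 'I_m.+1, l != ord0 -> 0 < tau l)
  (theta : 'I_N.+1 -> R) (Htheta_inj : injective theta)
  (Htheta_rng : forall j, - tau_max tau <= theta j <= 0)
  (Htheta0 : theta ord_max = 0)
  (lam : R[i]) (p : {poly R[i]})
  (Hp : is_pN theta lam p)
  (Hp_uniq : forall q : {poly R[i]}, is_pN theta lam q -> q = p)
  (HL : lam%:M - cmx (AN theta A tau) \in unitmx)
  (HR : lam%:M - cmx (A ord0)
          - \sum_(l < m.+1 | l != ord0) (p.[(- tau l)%:C] *: cmx (A l))
        \in unitmx) :
  ctr (cmx (BN R n N)) *m invmx (lam%:M - cmx (AN theta A tau)) *m cmx (BN R n N)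
  = invmx (lam%:M - cmx (A ord0)
           - \sum_(l < m.+1 | l != ord0) (p.[(- tau l)%:C] *: cmx (A l))).
Proof.
case: Hp => size_p p0 p_colloc.
apply: (mul_invmx_eq (X := colloc_vec n theta p) HL).
- exact: AN_colloc_vec.
- exact: ctr_BN_colloc_vec.
Qed.
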